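(* Let $\langle W,\mathcal{N},V\rangle$ be an nIML1-model satisfying the $T$-condition (for all $w,v\in W$, $v\in\bigcup\mathcal{N}_w$ implies $\bigcap\mathcal{N}_v\subseteq\bigcup\mathcal{N}_w$). Then for every $w\in W$ the family $\mathcal{U}_w$ of $w$-open sets is a topology on $\bigcup\mathcal{N}_w$: it contains $\emptyset$ and $\bigcup\mathcal{N}_w$, and it is closed under arbitrary unions and under arbitrary intersections.
   Context: An nIML1-model is a triple $\langle W,\mathcal{N},V\rangle$ with $W\neq\emptyset$, $\mathcal{N}:W\to P(P(W))$ satisfying for all $w$: (a) $w\in\bigcap\mathcal{N}_w$; (b) $\bigcap\mathcal{N}_w\in\mathcal{N}_w$; (c) $u\in\bigcap\mathcal{N}_w\Rightarrow\bigcap\mathcal{N}_u\subseteq\bigcap\mathcal{N}_w$; (d) $\bigcap\mathcal{N}_w\subseteq X\subseteq\bigcup\mathcal{N}_w\Rightarrow X\in\mathcal{N}_w$; (e) $u\in\bigcap\mathcal{N}_w\Rightarrow\bigcup\mathcal{N}_u\subseteq\bigcup\mathcal{N}_w$, where $\bigcap\mathcal{N}_w$ and $\bigcup\mathcal{N}_w$ are the intersection and union of the family $\mathcal{N}_w$, and $V$ is a map from propositional variables to $P(W)$ with $w\in V(q)\Rightarrow\bigcap\mathcal{N}_w\subseteq V(q)$. A set $X\subseteq W$ is $w$-open iff $X\subseteq\bigcup\mathcal{N}_w$ and $\bigcap\mathcal{N}_v\subseteq X$ for every $v\in X$; $\mathcal{U}_w$ is the set of all $w$-open sets. (The intersection of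 the empty subfamily is understood as the whole space $\bigcup\mathcal{N}_w$.) *)

Set Implicit Arguments.

Section Defs.
Variable W : Type.

Definition subset (X Y : W -> Prop) : Prop := forall x, X x -> Y x.

Definition bigU (F : (W -> Prop) -> Prop) : W -> Prop :=
  fun x => exists X, F X /\ X x.
Definition bigI (F : (W -> Prop) -> Prop) : W -> Prop :=
  fun x => forall X, F X -> X x.

(* Intersection of a subfamily F relative to the space S:
   the intersection of the empty family is the whole space S. *)
Definition bigI_in (S : W -> Prop) (F : (W -> Prop) -> Prop) : W -> Prop :=
  fun x => S x /\ forall X, F X -> X x.

Definition set0 : W -> Prop := fun _ => False.

Definition nIML1_model (N : W -> (W -> Prop) -> Prop) (V : nat -> W -> Prop)
  : Prop :=
  inhabited W /\
  (forall w,
     bigI (N w) w /\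
     N w (bigI (N w)) /\
     (forall u, bigI (N w) u -> subset (bigI (N u)) (bigI (N w))) /\
     (forall X, subset (bigI (N w)) X -> subset X (bigU (N w)) -> N w X) /\
     (forall u, bigI (N w) u -> subset (bigU (N u)) (bigU (N w)))) /\
  (forall q w, V q w -> subset (bigI (N w)) (V q)).

Definition T_condition (N : W -> (W -> Prop) -> Prop) : Prop :=
  forall w v, bigU (N w) v -> subset (bigI (N v)) (bigU (N w)).

Definition w_open (N : W -> (W -> Prop) -> Prop) (w : W) (X : W -> Prop)
  : Prop :=
  subset X (bigU (N w)) /\ forall v, X v -> subset (bigI (N v)) X.

End Defs.


(* Only the T-condition matters: it says precisely that the space
   [bigU (N w)] is itself w-open, and then the intersection of w-open sets
   relative to that space is w-open pointwise.  Unions and the empty set are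
   w-open for any neighbourhood function. *)

Section WOpen.

Variables (W : Type) (N : W -> (W -> Prop) -> Prop) (w : W).

Lemma w_open_set0 : w_open N w (@set0 W).
Proof. split; intros ? []. Qed.

Lemma w_open_space_of_T : T_condition N -> w_open N w (bigU (N w)).
Proof.
  intros HT. split.
  - intros x Hx. exact Hx.
  - exact (HT w).
Qed.

Lemma w_open_bigU (F : (W -> Prop) -> Prop) :
  (forall X, F X -> w_open N w X) -> w_open N w (bigU F).
Proof.
  intros HF. split.
  - intros x [X [FX Xx]]. exact (proj1 (HF X FX) x Xx).
  - intros v [X [FX Xv]] u Hu.
    exists X. split; [exact FX |].
    exact (proj2 (HF X FX) v Xv u Hu).
Qed.

Lemma w_open_bigI_in (F : (W -> Prop) -> Prop) :
  w_open N w (bigU (N w)) ->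
  (forall X, F X -> w_open N w X) -> w_open N w (bigI_in (bigU (N w)) F).
Proof.
  intros [_ Hspace] HF. split.
  - intros x [Sx _]. exact Sx.
  - intros v [Sv Hv] u Hu. split.
    + exact (Hspace v Sv u Hu).
    + intros X FX. exact (proj2 (HF X FX) v (Hv X FX) u Hu).
Qed.

End WOpen.

Theorem theorem10p1 (W : Type) (N : W -> (W -> Prop) -> Prop)
  (V : nat -> W -> Prop) :
  nIML1_model N V -> T_condition N ->
  forall w : W,
    w_open N w (@set0 W) /\
    w_open N w (bigU (N w)) /\
    (forall F : (W -> Prop) -> Prop,
       (forall X, F X -> w_open N w X) -> w_open N w (bigU F)) /\
    (forall F : (W -> Prop) -> Prop,
       (forall X, F X -> w_open N w X) ->
       w_open N w (bigI_in (bigU (N w)) F)).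
Proof.
  intros _ HT w.
  pose proof (w_open_space_of_T W N w HT) as Hspace.
  split; [| split; [| split]].
  - apply w_open_set0.
  - exact Hspace.
  - apply w_open_bigU.
  - intros F. exact (w_open_bigI_in W N w F Hspace).
Qed.
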